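(* For every graph $G$ and integer $k$, calling naive-fvs$(G,k,\emptyset)$ returns a feedback vertex set of $G$ of size at most $k$ if $G$ has one, and returns ``NO'' otherwise.
   Context: All graphs are finite, simple and undirected; $d_G(v)$ denotes the degree of $v$ in $G$, $G-S$ denotes deletion of a vertex set $S$, and $G[S]$ the induced subgraph. A feedback vertex set of $G$ is a set $V_-\subseteq V(G)$ such that $G-V_-$ is a forest. Algorithm naive-fvs$(G,k,F)$ (with $k$ an integer and $F\subseteq V(G)$ inducing a forest) returns a set of vertices or ``NO'' as follows (all choices among several candidates are arbitrary; degrees are in the current graph $G$): (0) If $k<0$ return NO; if $V(G)=\emptyset$ return $\emptyset$. (1) If some vertex $v$ has degree less than $2$, return naive-fvs$(G-\{v\},k,F\setminus\{v\})$. (2) If some $v\in V(G)\setminus F$ has two neighbors in the same connected component of $G[F]$, let $X=$ naive-fvs$(G-\{v\},k-1,F)$ and return $X\cup\{v\}$ (NO if $X$ is NO). (3) Pick $v\in V(G)\setminus F$ of maximum degree. (4) If $d(v)=2$: set $X=\emptyset$; while $G$ contains a cycle $C$, take any vertex $x$ of $C$ not in $F$, add $x$ to $X$ and delete $x$ from $G$; then return $X$ if $|X|\le k$, else NO. (5) Let $X=$ naive-fvs$(G-\{v\},k-1,F)$; if $X$ is not NO, return $X\cup\{v\}$. (6) Return naive-fvs$(G,k,F\cup\{v\})$. *)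

From HB Require Import structures.
From mathcomp Require Import all_boot all_order all_algebra.
Set Implicit Arguments.
Unset Strict Implicit.
Unset Printing Implicit Defensive.
Import Order.TTheory GRing.Theory Num.Theory.

(* A finite simple graph is a finType T of vertices together with a symmetric,
   irreflexive adjacency relation e.  The "current graph" handled by the
   algorithm is the induced subgraph G[V] for a vertex set V : {set T}. *)

Section Graph.
Variables (T : finType) (e : rel T).

Definition deg (V : {set T}) (v : T) : nat := #|[set u in V | e v u]|.

Definition is_cycle (V : {set T}) (c : seq T) : Prop :=
  [/\ 3 <= size c, all (fun x => x \in V) c, uniq c & cycle e c].

Definition forest (V : {set T}) : Prop := ~ exists c, is_cycle V c.

Definition is_fvs (V X : {set T}) : Prop := X \subset V /\ forest (V :\: X).

Definition erestr (V F : {set T}) : rel T :=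
  [rel x y | [&& x \in V :&: F, y \in V :&: F & e x y]].

Definition two_nbrs_same_comp (V F : {set T}) (v : T) : Prop :=
  exists u w, [/\ u != w, u \in V :&: F, w \in V :&: F &
                  [/\ e v u, e v w & connect (erestr V F) u w]].

(* the while-loop of step (4): loop V F X X' means that, starting from the
   current graph G[V] and the accumulated set X, some run of the loop ends
   with accumulated set X' *)
Inductive loop4 (F : {set T}) : {set T} -> {set T} -> {set T} -> Prop :=
| loop4_done V X : forest V -> loop4 F V X X
| loop4_step V X X' c x :
    is_cycle V c -> x \in c -> x \notin F ->
    loop4 F (V :\ x) (x |: X) X' -> loop4 F V X X'.

(* naive V k F r : r is a possible result of naive-fvs(G[V], k, F)
   (None = "NO"), over all possible arbitrary choices. *)
Inductive naive : {set T} -> int -> {set T} -> option {set T} -> Prop :=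
| naive0_neg V k F : (k < 0)%R -> naive V k F None
| naive0_empty V k F : (0 <= k)%R -> V = set0 -> naive V k F (Some set0)
| naive1 V k F v r :
    (0 <= k)%R -> V != set0 ->
    v \in V -> deg V v < 2 ->
    naive (V :\ v) k (F :\ v) r -> naive V k F r
| naive2 V k F v r :
    (0 <= k)%R -> V != set0 ->
    (forall u, u \in V -> 2 <= deg V u) ->
    v \in V :\: F -> two_nbrs_same_comp V F v ->
    naive (V :\ v) (k - 1)%R F r -> naive V k F (omap (fun X => v |: X) r)
| naive4 V k F v X :
    (0 <= k)%R -> V != set0 ->
    (forall u, u \in V -> 2 <= deg V u) ->
    (forall u, u \in V :\: F -> ~ two_nbrs_same_comp V F u) ->
    v \in V :\: F -> (forall u, u \in V :\: F -> deg V u <= deg V v) ->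
    deg V v = 2 ->
    loop4 F V set0 X ->
    naive V k F (if (#|X|%:Z <= k)%R then Some X else None)
| naive5 V k F v X :
    (0 <= k)%R -> V != set0 ->
    (forall u, u \in V -> 2 <= deg V u) ->
    (forall u, u \in V :\: F -> ~ two_nbrs_same_comp V F u) ->
    v \in V :\: F -> (forall u, u \in V :\: F -> deg V u <= deg V v) ->
    deg V v != 2 ->
    naive (V :\ v) (k - 1)%R F (Some X) -> naive V k F (Some (v |: X))
| naive6 V k F v r :
    (0 <= k)%R -> V != set0 ->
    (forall u, u \in V -> 2 <= deg V u) ->
    (forall u, u \in V :\: F -> ~ two_nbrs_same_comp V F u) ->
    v \in V :\: F -> (forall u, u \in V :\: F -> deg V u <= deg V v) ->
    deg V v != 2 ->
    naive (V :\ v) (k - 1)%R F None ->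
    naive V k (F :|: [set v]) r -> naive V k F r.

End Graph.

(* Soundness is an induction along the recursion with the invariant that
   naive-fvs(G[V], k, F) decides whether G[V] has a feedback vertex set of size
   at most k disjoint from F (the vertices the algorithm has decided to keep).
   Steps (1) and (2) are safe because a vertex of degree < 2 lies on no cycle,
   while a vertex with two neighbours in one component of G[F] lies on a cycle
   whose other vertices are all in F.  The heart is step (4): once every vertex
   outside F has degree at most 2, deleting any non-F vertex x of a cycle is
   optimal.  Indeed, if a solution Y misses x and no y in Y can be traded for
   x, then every y in Y has its two neighbours connected in S = G - Y - x;
   walking around the cycle then connects the two cycle-neighbours of x inside
   S, which closes a cycle through x in G - Y.
   Termination follows from the decrease of |V| + |V \ F|; the invariant that
   G[F] is a forest guarantees that the loop of step (4) and the choice of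
   step (3) always find a vertex outside F, since a nonempty graph of minimum
   degree 2 contains a cycle. *)

From HB Require Import structures.
From mathcomp Require Import all_boot all_order all_algebra zify.
From Stdlib Require Import Classical.
Import Order.TTheory GRing.Theory Num.Theory.
Set Implicit Arguments.
Unset Strict Implicit.

Section NaiveFVS.
Variables (T : finType) (e : rel T).
Hypothesis e_sym : symmetric e.
Hypothesis e_irr : irreflexive e.

(** * Cycles and forests *)

Definition induced (S : {set T}) : rel T := [rel a b | [&& a \in S, b \in S & e a b]].

Lemma induced_sym (S : {set T}) : symmetric (induced S).
Proof. by move=> a b; rewrite /induced /= e_sym andbCA. Qed.

Lemma path_induced (S : {set T}) a p :
  {subset a :: p <= S} -> path e a p -> path (induced S) a p.
Proof.
move=> /allP Sap; apply: sub_in_path Sap => u w uS wS euw.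
by rewrite /induced /= uS wS.
Qed.

Lemma induced_path (S : {set T}) u p : path (induced S) u p ->
  [/\ path e u p, {subset p <= S} & (p != [::] -> u \in S)].
Proof.
elim: p u => [|h t IH] u /=; first by split.
case/andP=> /and3P[uS hS euh] /IH[pt St _].
by split=> [|z|//]; rewrite ?euh // inE => /predU1P[->|/St].
Qed.

Lemma forest0 : forest e set0.
Proof. by case=> -[|z c] [] // _ /andP[]; rewrite inE. Qed.

Lemma forest_subset (A B : {set T}) : A \subset B -> forest e B -> forest e A.
Proof.
move=> sAB fB [c [sz /allP Ac u cc]]; apply: fB; exists c; split => //.
by apply/allP => z /Ac; apply: (subsetP sAB).
Qed.

Lemma cycle_mem (V : {set T}) c z : is_cycle e V c -> z \in c -> z \in V.
Proof. by case=> _ /allP Vc _ _ /Vc. Qed.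

Lemma forest_setD1 (W : {set T}) v : forest e (W :\ v) ->
  (forall c, is_cycle e W c -> v \in c -> False) -> forest e W.
Proof.
move=> fWv no_v [c cyc]; case: (boolP (v \in c)) => [/(no_v c cyc) // | vc].
apply: fWv; exists c; case: cyc => sz /allP Wc uc cc; split => //.
apply/allP => z zc; rewrite inE Wc // andbT inE.
by apply: contraNneq _ vc => <-.
Qed.

Lemma deg_subset (A B : {set T}) u : A \subset B -> deg e A u <= deg e B u.
Proof.
move=> sAB; apply/subset_leq_card/subsetP => z.
by rewrite !inE => /andP[/(subsetP sAB) -> ->].
Qed.

Lemma is_cycle_rot (V : {set T}) c i : is_cycle e V (rot i c) <-> is_cycle e V c.
Proof. by rewrite /is_cycle size_rot (eq_all_r (mem_rot i c)) rot_uniq rot_cycle. Qed.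

Lemma cycle_rot_to (V : {set T}) c y : is_cycle e V c -> y \in c ->
  exists a p, [/\ is_cycle e V [:: y, a & p], p != [::] &
                  forall z, (z \in c) = (z \in [:: y, a & p])].
Proof.
move=> cyc /rot_to[i p def_c].
have {cyc} : is_cycle e V (rot i c) by apply/is_cycle_rot.
rewrite def_c; case: p def_c => [|a [|b p]] def_c cyc; try by case: cyc.
by exists a, (b :: p); split=> // z; rewrite -def_c mem_rot.
Qed.

Lemma cycle_neighbours (W : {set T}) c y : is_cycle e W c -> y \in c ->
  exists a b, [/\ a != b, e y a, e y b &
    forall S : {set T}, {subset [predD1 c & y] <= S} ->
      [/\ a \in S, b \in S & connect (induced S) a b]].
Proof.
move=> cyc yc; have [a [p [[_ _ uniq_c cyc_c] p_ne mem_c]]] := cycle_rot_to cyc yc.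
case: p p_ne uniq_c cyc_c mem_c => [//|h t] _ uniq_c cyc_c mem_c.
move: cyc_c; rewrite /cycle rcons_path => /andP[/andP[eya path_p] elast].
rewrite /= in elast.
move: uniq_c; rewrite /= !inE => /andP[/norP[ya y_ht] /andP[a_ht _]].
have b_ht : last h t \in h :: t by apply: mem_last.
exists a, (last h t); split.
- by apply: contraNneq a_ht => ->.
- done.
- by rewrite e_sym.
move=> S cS; have sub_S : {subset a :: h :: t <= S}.
  move=> z z_aht; apply: cS; rewrite inE mem_c inE z_aht orbT andbT.
  by apply: contraTneq z_aht => ->; rewrite !inE negb_or ya.
split; [exact: sub_S (mem_head _ _) | by apply: sub_S; rewrite inE b_ht orbT |].
by apply/connectP; exists (h :: t); first exact: path_induced.
Qed.

Lemma cycle_deg (V : {set T}) c v : is_cycle e V c -> v \in c -> 2 <= deg e V v.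
Proof.
move=> cyc vc; have [a [b [ab eva evb inS]]] := cycle_neighbours cyc vc.
have [aV bV _] : [/\ a \in V, b \in V & connect (induced V) a b].
  by apply: inS => z /andP[_ /(cycle_mem cyc)].
have <- : #|[set a; b]| = 2 by rewrite cards2 ab.
apply/subset_leq_card/subsetP => z.
by rewrite !inE => /orP[] /eqP->; rewrite ?aV ?bV.
Qed.

Lemma cycle_of_neighbours (W S : {set T}) v u w :
  v \in W -> S \subset W -> v \notin S -> u != w -> e v u -> e v w ->
  connect (induced S) u w -> ~ forest e W.
Proof.
move=> vW sSW vS uw evu evw /connectP[p pp lp].
case: (shortenP pp) lp => {pp}p pp uniq_up _ lp.
have [path_p pS uS] := induced_path pp.
have {}uS : u \in S by apply: uS; apply: contra_neq uw => p0; rewrite lp p0.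
apply; exists [:: v, u & p]; split.
- by case: p {pp uniq_up pS path_p} lp => //= wu; rewrite wu eqxx in uw.
- apply/allP => z; rewrite !inE => /or3P[/eqP-> // | /eqP-> | /pS zS];
    exact: (subsetP sSW).
- rewrite cons_uniq uniq_up andbT inE negb_or.
  by apply/andP; split; [apply: contraNneq _ vS => -> | apply: contra vS => /pS].
- by rewrite /= evu rcons_path path_p -lp e_sym evw.
Qed.

Lemma closed_path_not_forest (V : {set T}) z a l w :
  {subset [:: z, a & l] <= V} -> path e z (a :: l) -> uniq [:: z, a & l] ->
  w \in l -> e z w -> ~ forest e V.
Proof.
move=> + + + wl ezw; case/splitPr: wl => l1 l2 Vzal pzal uzal.
apply; exists [:: z, a & rcons l1 w].
have Vsub : {subset [:: z, a & rcons l1 w] <= V}.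
  by move=> x x_in; apply: Vzal; rewrite -cat_rcons -!cat_cons mem_cat x_in.
split.
- by rewrite /= size_rcons.
- by apply/allP.
- by move: uzal; rewrite -cat_rcons -!cat_cons cat_uniq => /andP[].
- rewrite /cycle rcons_path /= last_rcons (e_sym w) ezw andbT.
  by move: pzal; rewrite /= -cat_rcons cat_path => /and3P[-> ->].
Qed.

Lemma mindeg2_path_not_forest (V : {set T}) :
  {in V, forall u, 2 <= deg e V u} ->
  forall z l, {subset z :: l <= V} -> path e z l -> uniq (z :: l) -> ~ forest e V.
Proof.
move=> mindeg z l; have [n] := ubnP (#|V| - size l); elim: n z l => // n IH z l.
rewrite ltnS => lt_n Vzl pzl uzl; have zV := Vzl z (mem_head _ _).
(* A neighbour w of z other than its successor on the path either extends
   the path or, if it already lies on it, closes a cycle. *)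
have : 0 < #|[set u in V | e z u] :\ head z l|.
  by move: (mindeg z zV); rewrite /deg (cardsD1 (head z l)); case: (_ \in _) => /=; lia.
rewrite card_gt0 => /set0Pn[w]; rewrite !inE => /andP[w_head /andP[wV ezw]].
case: (boolP (w \in z :: l)) => [wzl | wNzl].
  have wz : w != z by apply: contraTneq ezw => ->; rewrite e_irr.
  case: l lt_n w_head wzl Vzl pzl uzl => [|a l] _ /= w_a.
    by rewrite inE (negPf wz).
  rewrite !inE (negPf wz) (negPf w_a) /= => wl Vzal pzal uzal.
  exact: (closed_path_not_forest Vzal pzal uzal wl ezw).
have uwzl : uniq [:: w, z & l] by rewrite /= wNzl.
have Vwzl : {subset [:: w, z & l] <= V} by move=> x; rewrite inE => /predU1P[-> | /Vzl].
have : #|[:: w, z & l]| <= #|V| by apply/subset_leq_card/subsetP.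
rewrite (card_uniqP uwzl) /= => size_le.
apply: (IH w (z :: l)) => //=; last by rewrite pzl andbT e_sym.
by move: lt_n size_le; move: #|V| (size l) => m s; lia.
Qed.

Lemma mindeg2_not_forest (V : {set T}) :
  V != set0 -> {in V, forall u, 2 <= deg e V u} -> ~ forest e V.
Proof.
case/set0Pn=> z zV mindeg.
apply: (mindeg2_path_not_forest mindeg (z := z) (l := [::])) => //.
by move=> x; rewrite inE => /eqP->.
Qed.

(** * Exchanging vertices of a solution when degrees are at most 2 *)

Definition fvs_avoiding (V F X : {set T}) : Prop :=
  X \subset V :\: F /\ forest e (V :\: X).

Lemma fvs_avoiding_setD1 (V F Y : {set T}) v :
  fvs_avoiding V F Y -> fvs_avoiding (V :\ v) F (Y :\ v).
Proof.
move=> [sYVF fVY]; split.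
  apply/subsetP => z; rewrite !inE => /andP[-> /(subsetP sYVF)].
  by rewrite inE => ->.
apply: forest_subset fVY; apply/subsetP => z.
by rewrite !inE; case: eqP => //= _ /andP[-> ->].
Qed.

Lemma fvs_avoiding_setU1 (V F X : {set T}) v : v \in V :\: F ->
  fvs_avoiding (V :\ v) F X -> fvs_avoiding V F (v |: X).
Proof.
move=> vVF [sXVF fVX]; split; last by rewrite -setDDl.
apply/subsetP => z; rewrite in_setU1 => /predU1P[-> // | /(subsetP sXVF)].
by rewrite !inE => /and3P[-> _ ->].
Qed.

Lemma deg_le2_neighbour (V : {set T}) y p q a : deg e V y <= 2 -> p != q ->
  p \in V -> q \in V -> e y p -> e y q -> a \in V -> e y a -> (a == p) || (a == q).
Proof.
move=> deg_y pq pV qV eyp eyq aV eya; apply: contraTT deg_y => a_pq.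
have : #|a |: [set p; q]| <= deg e V y.
  by apply/subset_leq_card/subsetP => z; rewrite !inE => /or3P[] /eqP->; rewrite ?aV ?pV ?qV.
by rewrite cardsU1 cards2 pq !inE a_pq -ltnNge.
Qed.

Section Exchange.
Variables (V F Y : {set T}) (x : T).
Hypothesis deg_le2 : {in V :\: F, forall u, deg e V u <= 2}.
Hypothesis Y_fvs : fvs_avoiding V F Y.
Hypothesis xV : x \in V.
Hypothesis xY : x \notin Y.
Hypothesis no_exchange : forall y, y \in Y -> ~ forest e ((V :\ x) :\: (Y :\ y)).

Let S := (V :\: Y) :\ x.

Lemma outside_S z : z \in V -> z != x -> z \notin S -> z \in Y.
Proof. by move=> zV zx; rewrite !inE zV zx andbT negbK. Qed.

Lemma S_sub_V z : z \in S -> z \in V.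
Proof. by rewrite !inE => /and3P[]. Qed.

Lemma neighbours_connected y p q : y \in Y -> p != q -> p \in V -> q \in V ->
  e y p -> e y q -> [/\ p \in S, q \in S & connect (induced S) p q].
Proof.
move=> yY pq pV qV eyp eyq; apply/and3P/negPn/negP => not_conn.
(* Otherwise y could be traded for x: a cycle through y avoiding x and Y :\ y
   leaves y through its only neighbours p and q, which are then connected in S. *)
apply: (no_exchange yY); apply: (forest_setD1 (v := y)).
  apply: forest_subset Y_fvs.2; apply/subsetP => z.
  by rewrite !inE; case: eqP => //= _ /and3P[-> _ ->].
move=> c cyc yc; have [a [b [ab eya eyb inS]]] := cycle_neighbours cyc yc.
have [aS bS ab_conn] : [/\ a \in S, b \in S & connect (induced S) a b].
  apply: inS => z; rewrite !inE => /andP[zy /(cycle_mem cyc)].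
  by rewrite !inE zy /= => /andP[/negbTE-> /andP[-> ->]].
have yVF : y \in V :\: F by apply: (subsetP Y_fvs.1).
have nbr_pq := deg_le2_neighbour (deg_le2 yVF) pq pV qV eyp eyq.
have /orP[/eqP ap | /eqP aq] := nbr_pq _ (S_sub_V aS) eya;
have /orP[/eqP bp | /eqP bq] := nbr_pq _ (S_sub_V bS) eyb;
  subst; rewrite ?eqxx // in ab; move/negP: not_conn; apply.
  by rewrite aS bS.
by rewrite aS bS (sym_connect_sym (induced_sym S)).
Qed.

Lemma connect_through y p r : y \in Y -> p \in S -> r \in V -> e y p -> e y r ->
  r \in S /\ connect (induced S) p r.
Proof.
move=> yY pS rV eyp eyr; case: (eqVneq p r) => [<- // | pr].
by have [_ -> ->] := neighbours_connected yY pr (S_sub_V pS) rV eyp eyr.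
Qed.

Lemma connect_along p l : p \in S -> {subset l <= V :\ x} ->
  path e p (rcons l x) -> last p l \in S /\ connect (induced S) p (last p l).
Proof.
have [n] := ubnP (size l); elim: n p l => // n IH p [_ pS _ _ | q l] /=; first by [].
rewrite ltnS => size_l pS Vxql /andP[epq pql].
have [qx qV] : q != x /\ q \in V.
  by apply/andP; rewrite -in_setD1; apply: Vxql; rewrite inE eqxx.
have Vxl : {subset l <= V :\ x} by move=> z zl; apply: Vxql; rewrite inE zl orbT.
case: (boolP (q \in S)) => qS.
  have [lS q_conn] := IH q l size_l qS Vxl pql.
  by split=> //; apply: connect_trans q_conn; apply: connect1; rewrite /induced /= pS qS.
have qY := outside_S qV qx qS; rewrite e_sym in epq.
case: l size_l Vxl pql {Vxql} => [|r l] /= size_l Vxl /andP[eqr prl].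
  by have [] := connect_through qY pS xV epq eqr; rewrite !inE eqxx.
have rV : r \in V by have := Vxl r (mem_head _ _); rewrite inE => /andP[].
have [rS pr_conn] := connect_through qY pS rV epq eqr.
have Vxl' : {subset l <= V :\ x} by move=> z zl; apply: Vxl; rewrite inE zl orbT.
have [lS r_conn] := IH r l (ltnW size_l) rS Vxl' prl.
by split=> //; apply: connect_trans r_conn.
Qed.

Lemma no_exchange_cycle c : is_cycle e V c -> x \in c -> False.
Proof.
move=> cyc xc; have [a [l [[_ Vxal uxal]]]] := cycle_rot_to cyc xc.
rewrite /= => /andP[exa pal]; case: l Vxal uxal pal => [//|h t] Vxal uxal pal _ _.
move: uxal; rewrite /= !inE => /andP[/norP[xa /norP[xh xt]] /andP[/norP[ah a_t] _]].
have Vx_ht : {subset h :: t <= V :\ x}.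
  move=> z z_ht; apply/setD1P; split; last by apply: (allP Vxal); do 2 apply: mem_behead.
  by apply: contraTneq z_ht => ->; rewrite inE negb_or xh.
have aV : a \in V by rewrite (allP Vxal) // !inE eqxx orbT.
have hV : h \in V by have := Vx_ht h (mem_head _ _); rewrite inE => /andP[].
have pht := pal; move: pht; rewrite /= => /andP[eah _].
have aS : a \in S.
  apply: contraT => aNS; have aY : a \in Y by apply: outside_S aNS; rewrite // eq_sym.
  have hx : h != x by rewrite eq_sym.
  have eax : e a x by rewrite e_sym.
  by have [_] := neighbours_connected aY hx hV xV eah eax; rewrite !inE eqxx.
have [_ ab_conn] := connect_along aS Vx_ht pal.
move: pal; rewrite rcons_path => /andP[_ ebx].
apply: (cycle_of_neighbours _ (subD1set _ x) _ _ exa _ ab_conn) Y_fvs.2.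
- by rewrite inE xY xV.
- by rewrite !inE eqxx.
- have := mem_last h t; apply: contraTneq => /= <-.
  by rewrite inE negb_or ah.
- by rewrite e_sym.
Qed.

End Exchange.

Lemma fvs_exchange (V F Y : {set T}) c x :
  {in V :\: F, forall u, deg e V u <= 2} -> fvs_avoiding V F Y ->
  is_cycle e V c -> x \in c -> exists2 y, y \in Y & fvs_avoiding (V :\ x) F (Y :\ y).
Proof.
move=> deg_le2 Y_fvs cyc xc; case: (boolP (x \in Y)) => xY.
  by exists x => //; apply: fvs_avoiding_setD1.
apply: NNPP => no_y; apply: (no_exchange_cycle deg_le2 Y_fvs _ xY _ cyc xc).
  exact: cycle_mem cyc xc.
move=> y yY fy; apply: no_y; exists y => //; split=> //.
apply/subsetP => z; rewrite !inE => /andP[zy zY].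
have := subsetP Y_fvs.1 z zY; rewrite !inE => /andP[-> ->]; rewrite andbT.
by apply: contraNneq xY => <-.
Qed.

Lemma cycle_meets_compl (V F : {set T}) c :
  forest e (V :&: F) -> is_cycle e V c -> exists2 x, x \in c & x \notin F.
Proof.
move=> fVF [sz /allP Vc uc cc].
have [/hasP // | /hasPn Fc] := boolP (has [predC F] c).
exfalso; apply: fVF; exists c; split=> //; apply/allP => z zc.
by rewrite inE Vc //= -[z \in F]negbK Fc.
Qed.

Lemma loop4_fvs F V X0 X : loop4 e F V X0 X ->
  exists2 D, X = D :|: X0 & fvs_avoiding V F D.
Proof.
elim=> {V X0 X} [V X fV | V X X' c x cyc xc xF _ [D -> D_fvs]].
  by exists set0; rewrite ?set0U //; split; rewrite ?sub0set ?setD0.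
exists (x |: D); first by rewrite setUA (setUC D).
by apply: fvs_avoiding_setU1 D_fvs; rewrite inE xF (cycle_mem cyc xc).
Qed.

Lemma loop4_min F V X0 X : loop4 e F V X0 X ->
  {in V :\: F, forall u, deg e V u <= 2} ->
  forall Y, fvs_avoiding V F Y -> #|X| <= #|X0| + #|Y|.
Proof.
elim=> {V X0 X} [V X fV _ Y _ | V X X' c x cyc xc xF _ IH deg_le2 Y Y_fvs].
  exact: leq_addr.
have deg_le2' : {in (V :\ x) :\: F, forall u, deg e (V :\ x) u <= 2}.
  move=> u; rewrite !inE => /and3P[uF ux uV].
  by apply: leq_trans (deg_subset u (subsetDl _ _)) (deg_le2 _ _); rewrite inE uF.
have [y yY Y'_fvs] := fvs_exchange deg_le2 Y_fvs cyc xc.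
apply: leq_trans (IH deg_le2' _ Y'_fvs) _.
by rewrite (cardsD1 y Y) yY cardsU1; case: (_ \in _) => /=; lia.
Qed.

Lemma loop4_exists F V X0 : forest e (V :&: F) -> exists X, loop4 e F V X0 X.
Proof.
have [n] := ubnP #|V|; elim: n V X0 => // n IH V X0 ltV fVF.
have [fV | /NNPP[c cyc]] := classic (forest e V); first by exists X0; constructor.
have [x xc xF] := cycle_meets_compl fVF cyc; have xV := cycle_mem cyc xc.
have [X loopX] : exists X, loop4 e F (V :\ x) (x |: X0) X.
  apply: IH; first by rewrite (cardsD1 x V) xV in ltV.
  by apply: forest_subset fVF; apply/setSI/subsetDl.
by exists X; apply: loop4_step cyc xc xF loopX.
Qed.

Lemma fvs_avoiding_deg_lt2 (V F X : {set T}) v : deg e V v < 2 ->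
  fvs_avoiding (V :\ v) (F :\ v) X -> fvs_avoiding V F X.
Proof.
move=> deg_v [sX fX]; split.
  apply/subsetP => z /(subsetP sX); rewrite !inE negb_and negbK.
  by case: eqP => //= _ /andP[-> ->].
apply: (forest_setD1 (v := v)).
  by apply: forest_subset fX; apply/subsetP => z; rewrite !inE => /and3P[-> -> ->].
move=> c cyc vc; have := cycle_deg cyc vc.
by rewrite leqNgt (leq_trans _ deg_v) // ltnS deg_subset // subsetDl.
Qed.

Lemma fvs_avoiding_forced (V F Y : {set T}) v : v \in V :\: F ->
  two_nbrs_same_comp e V F v -> fvs_avoiding V F Y -> v \in Y.
Proof.
move=> vVF [u [w [uw uVF wVF [evu evw conn]]]] [sY fY]; apply/negPn/negP => vY.
apply: (cycle_of_neighbours (S := V :&: F) _ _ _ uw evu evw conn) fY.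
- by move: vVF; rewrite !inE vY => /andP[].
- apply/subsetP => z; rewrite !inE => /andP[zV zF]; rewrite zV andbT.
  by apply: contraTN zF => /(subsetP sY); rewrite inE => /andP[].
- by move: vVF; rewrite !inE => /andP[/negPf->]; rewrite andbF.
Qed.

Lemma forest_setU1 (V F : {set T}) v : forest e (V :&: F) ->
  ~ two_nbrs_same_comp e V F v -> forest e (V :&: (F :|: [set v])).
Proof.
move=> fVF no_v; apply: (forest_setD1 (v := v)).
  by apply: forest_subset fVF; apply/subsetP => z; rewrite !inE; case: eqP; rewrite ?orbF.
move=> c cyc vc; have [a [b [ab eva evb inS]]] := cycle_neighbours cyc vc.
have [aS bS conn] : [/\ a \in V :&: F, b \in V :&: F & connect (erestr e V F) a b].
  apply: inS => z /andP[zv /(cycle_mem cyc)].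
  by rewrite !inE (negPf zv) orbF.
by apply: no_v; exists a, b.
Qed.

(** * Correctness *)

Definition solution (V F : {set T}) (k : int) (X : {set T}) : Prop :=
  fvs_avoiding V F X /\ (#|X|%:Z <= k)%R.

Definition naive_spec (V F : {set T}) (k : int) (r : option {set T}) : Prop :=
  match r with
  | Some X => solution V F k X
  | None => ~ exists X, solution V F k X
  end.

Lemma solution_setU1 (V F X : {set T}) k v : v \in V :\: F ->
  solution (V :\ v) F (k - 1) X -> solution V F k (v |: X).
Proof.
move=> vVF [X_fvs card_X]; split; first exact: fvs_avoiding_setU1.
by move: card_X; rewrite cardsU1; case: (_ \in _) => /=; lia.
Qed.

Lemma solution_setD1 (V F Y : {set T}) k v : v \in Y ->
  solution V F k Y -> solution (V :\ v) F (k - 1) (Y :\ v).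
Proof.
move=> vY [Y_fvs card_Y]; split; first exact: fvs_avoiding_setD1.
by move: card_Y; rewrite (cardsD1 v Y) vY; lia.
Qed.

Lemma solution_notin (V F Y : {set T}) k v :
  ~ (exists X, solution (V :\ v) F (k - 1) X) -> solution V F k Y -> v \notin Y.
Proof.
move=> none Y_sol; apply/negP => vY.
by apply: none; exists (Y :\ v); apply: solution_setD1.
Qed.

Lemma naive_correct V k F r : naive e V k F r -> naive_spec V F k r.
Proof.
elim=> {V k F r}.
- by move=> V k F k_lt0 [X [_]]; lia.
- move=> V k F k_ge0 ->; split; last by rewrite cards0.
  by split; [apply: sub0set | rewrite set0D; apply: forest0].
- move=> V k F v [X|] _ _ vV deg_v _ /= IH.
    by case: IH => X_fvs card_X; split=> //; apply: fvs_avoiding_deg_lt2 X_fvs.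
  move=> [Y [Y_fvs card_Y]]; apply: IH; exists (Y :\ v).
  have [sYv fYv] := fvs_avoiding_setD1 v Y_fvs; split; last first.
    by apply: le_trans card_Y; rewrite lez_nat subset_leq_card // subD1set.
  split=> //; apply: subset_trans sYv _.
  by apply/setDS/subD1set.
- move=> V k F v [X|] _ _ _ vVF two _ /= IH; first exact: solution_setU1.
  move=> [Y Y_sol]; apply: (negP (solution_notin IH Y_sol)).
  exact: fvs_avoiding_forced two Y_sol.1.
- move=> V k F v X _ _ _ _ vVF deg_max deg_v loopX.
  have [D XD X_fvs] := loop4_fvs loopX; rewrite setU0 in XD; subst D.
  case: ifP => [card_X | /negbT card_X]; first by [].
  move=> [Y [Y_fvs card_Y]]; apply: (negP card_X).
  have deg_le2 : {in V :\: F, forall u, deg e V u <= 2} by move=> u /deg_max; rewrite deg_v.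
  have := loop4_min loopX deg_le2 Y_fvs; rewrite cards0 add0n => card_XY.
  by apply: le_trans card_Y; rewrite lez_nat.
- by move=> V k F v X _ _ _ _ vVF _ _ _ /=; apply: solution_setU1.
- move=> V k F v [X|] _ _ _ _ vVF _ _ _ IH1 _ /= IH2.
    case: IH2 => [[sX fX] card_X]; split=> //; split=> //.
    by apply: subset_trans sX _; apply/setDS/subsetUl.
  move=> [Y Y_sol]; apply: IH2; exists Y.
  have [[sY fY] card_Y] := Y_sol; have vY := solution_notin IH1 Y_sol.
  split=> //; split=> //; apply/subsetP => z zY.
  have := subsetP sY z zY; rewrite !inE negb_or => /andP[-> ->]; rewrite andbT.
  by apply: contraNneq vY => <-.
Qed.

(** * Termination *)

Definition fvs_measure (V F : {set T}) : nat := #|V| + #|V :\: F|.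

Lemma fvs_measure_setD1 (V F F' : {set T}) v : v \in V ->
  (V :\ v) :\: F' \subset V :\: F -> fvs_measure (V :\ v) F' < fvs_measure V F.
Proof.
move=> vV /subset_leq_card le_VF; have := proper_card (properD1 vV).
by rewrite /fvs_measure; lia.
Qed.

Lemma fvs_measure_setU1 (V F : {set T}) v : v \in V :\: F ->
  fvs_measure V (F :|: [set v]) < fvs_measure V F.
Proof. by move=> vVF; rewrite /fvs_measure -setDDl ltn_add2l proper_card ?properD1. Qed.

Section Existence.
Variables (V F : {set T}) (k : int).
Hypothesis fVF : forest e (V :&: F).
Hypothesis IH : forall (V' F' : {set T}) k', fvs_measure V' F' < fvs_measure V F ->
  forest e (V' :&: F') -> exists r, naive e V' k' F' r.

Lemma naive_exists_branch : (0 <= k)%R -> V != set0 ->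
  {in V, forall u, 2 <= deg e V u} ->
  {in V :\: F, forall u, ~ two_nbrs_same_comp e V F u} ->
  exists r, naive e V k F r.
Proof.
move=> k_ge0 V_ne mindeg no_two.
have [u0 u0VF] : exists u0, u0 \in V :\: F.
  apply/set0Pn; apply: contraT; rewrite negbK setD_eq0 => /setIidPl VF; exfalso.
  by apply: (mindeg2_not_forest V_ne mindeg); rewrite -VF.
have [v vVF deg_max] : exists2 v, v \in V :\: F &
    {in V :\: F, forall u, deg e V u <= deg e V v}.
  by case: (arg_maxnP (deg e V) u0VF) => v; exists v.
have vV : v \in V by move: vVF; rewrite inE => /andP[].
have [deg_v | deg_v] := eqVneq (deg e V v) 2.
  have [X loopX] := loop4_exists set0 fVF.
  by eexists; apply: naive4 k_ge0 V_ne mindeg no_two vVF deg_max deg_v loopX.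
have fVvF : forest e ((V :\ v) :&: F).
  by apply: forest_subset fVF; apply/setSI/subsetDl.
have lt_v := fvs_measure_setD1 vV (setSD F (subsetDl V [set v])).
have [[X|] naive_v] := IH (k - 1) lt_v fVvF.
  by eexists; apply: naive5 k_ge0 V_ne mindeg no_two vVF deg_max deg_v naive_v.
have [r naive_r] := IH k (fvs_measure_setU1 vVF) (forest_setU1 fVF (no_two v vVF)).
by exists r; apply: naive6 k_ge0 V_ne mindeg no_two vVF deg_max deg_v naive_v naive_r.
Qed.

End Existence.

Lemma naive_exists V F k : forest e (V :&: F) -> exists r, naive e V k F r.
Proof.
have [n] := ubnP (fvs_measure V F); elim: n V F k => // n IHn V F k.
rewrite ltnS => le_n fVF.
have IH (V' F' : {set T}) k' : fvs_measure V' F' < fvs_measure V F ->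
    forest e (V' :&: F') -> exists r, naive e V' k' F' r.
  by move=> lt_VF; apply: IHn; apply: leq_trans lt_VF le_n.
have [k_lt0 | k_ge0] := ltP k 0%R; first by exists None; apply: naive0_neg.
have [V0 | V_ne] := eqVneq V set0; first by exists (Some set0); apply: naive0_empty.
have [/exists_inP[v vV deg_v] | /exists_inPn mindeg] := boolP [exists v in V, deg e V v < 2].
  have sub_VF : (V :\ v) :\: (F :\ v) \subset V :\: F.
    by apply/subsetP => z; rewrite !inE; case: eqP.
  have fVFv : forest e ((V :\ v) :&: (F :\ v)).
    by apply: forest_subset fVF; apply/setISS; apply: subsetDl.
  have [r naive_r] := IH _ _ k (fvs_measure_setD1 vV sub_VF) fVFv.
  by exists r; apply: naive1 naive_r.
have {}mindeg : {in V, forall u, 2 <= deg e V u} by move=> u /mindeg; rewrite -leqNgt.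
have [[v vVF two] | no_two] := classic (exists2 v, v \in V :\: F & two_nbrs_same_comp e V F v).
  have vV : v \in V by move: vVF; rewrite inE => /andP[].
  have fVvF : forest e ((V :\ v) :&: F).
    by apply: forest_subset fVF; apply/setSI/subsetDl.
  have lt_v := fvs_measure_setD1 vV (setSD F (subsetDl V [set v])).
  have [r naive_r] := IH _ _ (k - 1)%R lt_v fVvF.
  by eexists; apply: naive2 naive_r.
apply: naive_exists_branch => // u uVF two; exact: no_two (ex_intro2 _ _ u uVF two).
Qed.

End NaiveFVS.

Theorem mainTheorem2 (T : finType) (e : rel T)
  (e_sym : symmetric e) (e_irr : irreflexive e) (k : int) :
  (exists r, naive e [set: T] k set0 r) /\
  (forall r, naive e [set: T] k set0 r ->
     match r with
     | Some X => is_fvs e [set: T] X /\ (#|X|%:Z <= k)%R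
     | None => ~ exists X, is_fvs e [set: T] X /\ (#|X|%:Z <= k)%R
     end).
Proof.
split; first by apply: naive_exists => //; rewrite setI0; apply: forest0.
move=> r /(naive_correct e_sym); rewrite /naive_spec /solution /fvs_avoiding setD0.
by case: r => [X|] // none [X sol]; apply: none; exists X.
Qed.
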